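(* Let $G$ be a group generated by a set $X$, let $p_1,\dots,p_k$ be palindromes in $G$ and $u\in G$. Then: (1) if $q=p_1p_2$, then for every integer $m$ the element $q^m$ is a product of two palindromes; (2) $l_{\mathcal P}([u,p_1p_2\cdots p_k])\le 2k+\varepsilon$, where $\varepsilon=0$ if $k$ is even and $\varepsilon=1$ if $k$ is odd.
   Context: A palindrome in $G=\langle X\rangle$ is an element represented by a reduced word in $X^{\pm1}$ reading the same forwards and backwards; $l_{\mathcal P}(g)$ is the minimal number of palindromes whose product is $g$. The commutator is $[g,h]=g^{-1}h^{-1}gh$. *)

From Stdlib Require Import ZArith List.
Import ListNotations.

Record Group := {
  carrier :> Type;
  gmul : carrier -> carrier -> carrier;
  gone : carrier;
  ginv : carrier -> carrier;
  gmulA : forall x y z, gmul x (gmul y z) = gmul (gmul x y) z;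
  gmul1l : forall x, gmul gone x = x;
  gmul1r : forall x, gmul x gone = x;
  gmulVl : forall x, gmul (ginv x) x = gone;
  gmulVr : forall x, gmul x (ginv x) = gone
}.

Arguments gmul {g} _ _.
Arguments gone {g}.
Arguments ginv {g} _.

Section Words.
Variable G : Group.

(* A letter of X^{+-1}: an element x of X with a sign (true = x, false = x^{-1}). *)
Definition letter := (G * bool)%type.

Definition letter_val (a : letter) : G :=
  if snd a then fst a else ginv (fst a).

Definition word_eval (w : list letter) : G :=
  fold_right (fun a acc => gmul (letter_val a) acc) gone w.

Definition word_over (X : G -> Prop) (w : list letter) : Prop :=
  Forall (fun a => X (fst a)) w.

Fixpoint reduced (w : list letter) : Prop :=
  match w with
  | a :: ((b :: _) as t) => ~ (fst a = fst b /\ snd a <> snd b) /\ reduced t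
  | _ => True
  end.

Definition generates (X : G -> Prop) : Prop :=
  forall g : G, exists w, word_over X w /\ word_eval w = g.

Definition palindrome (X : G -> Prop) (g : G) : Prop :=
  exists w, word_over X w /\ reduced w /\ rev w = w /\ word_eval w = g.

Definition gprod (l : list G) : G := fold_right gmul gone l.

Definition lP_le (X : G -> Prop) (g : G) (n : nat) : Prop :=
  exists ps : list G, length ps <= n /\ Forall (palindrome X) ps /\ gprod ps = g.

Fixpoint gpow_nat (g : G) (n : nat) : G :=
  match n with O => gone | S n' => gmul g (gpow_nat g n') end.

Definition gpowZ (g : G) (m : Z) : G :=
  match m with
  | Z0 => gone
  | Zpos p => gpow_nat g (Pos.to_nat p)
  | Zneg p => ginv (gpow_nat g (Pos.to_nat p))
  end.

Definition commutator (g h : G) : G :=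
  gmul (ginv g) (gmul (ginv h) (gmul g h)).

End Words.

Arguments word_eval {G} _.
Arguments word_over {G} _ _.
Arguments reduced {G} _.
Arguments generates {G} _.
Arguments palindrome {G} _ _.
Arguments gprod {G} _.
Arguments lP_le {G} _ _ _.
Arguments gpow_nat {G} _ _.
Arguments gpowZ {G} _ _.
Arguments commutator {G} _ _.

From Stdlib Require Import ZArith List Classical Lia.
Import ListNotations.

(* It suffices to represent elements by palindromic words that need not be
   reduced: freely reducing the first half of such a word and then cancelling
   around the centre yields a reduced palindromic word.  Palindromic words are
   closed under inversion and under w* p w, where w* is w read backwards.
   Hence (p1 p2)^k p1 = p1 (p2 p1)^(k-1) p2 p1 is a palindrome by induction,
   and q^m = ((p1 p2)^(m-1) p1) p2 gives (1); negative m follow by inversion.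
   For (2), write u by a word w and let t be the value of w with every letter
   inverted; then u^-1 p t and t^-1 p u are palindromes, so
   u^-1 p_k^-1 ... p_1^-1 u = (u^-1 p_k^-1 t)(t^-1 p_(k-1)^-1 u) ...,
   with one extra palindrome t^-1 u at the end when k is odd. *)

Section GroupFacts.
Variable G : Group.

Lemma ginv_unique (x y : G) : gmul x y = gone -> y = ginv x.
Proof.
  intro H. rewrite <- (gmul1l G y), <- (gmulVl G x), <- gmulA, H, gmul1r.
  reflexivity.
Qed.

Lemma ginv_involutive (x : G) : ginv (ginv x) = x.
Proof. symmetry. apply ginv_unique, gmulVl. Qed.

Lemma ginv_mul (x y : G) : ginv (gmul x y) = gmul (ginv y) (ginv x).
Proof.
  symmetry. apply ginv_unique.
  rewrite <- gmulA, (gmulA _ y), gmulVr, gmul1l, gmulVr. reflexivity.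
Qed.

Lemma ginv_one : ginv (@gone G) = gone.
Proof. symmetry. apply ginv_unique, gmul1l. Qed.

Lemma gmulKV (x y : G) : gmul x (gmul (ginv x) y) = y.
Proof. rewrite gmulA, gmulVr, gmul1l. reflexivity. Qed.

Lemma gpow_nat_succ_r (x : G) k : gpow_nat x (S k) = gmul (gpow_nat x k) x.
Proof.
  induction k as [|k IH]; simpl in *.
  - rewrite gmul1l, gmul1r. reflexivity.
  - rewrite IH at 1. rewrite gmulA. reflexivity.
Qed.

Lemma gpow_nat_mul_shift (x y : G) k :
  gmul (gpow_nat (gmul x y) k) x = gmul x (gpow_nat (gmul y x) k).
Proof.
  induction k as [|k IH]; simpl.
  - rewrite gmul1l, gmul1r. reflexivity.
  - rewrite <- !gmulA, IH. reflexivity.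
Qed.

Lemma gprod_app (l1 l2 : list G) : gprod (l1 ++ l2) = gmul (gprod l1) (gprod l2).
Proof.
  induction l1 as [|x l1 IH]; simpl.
  - rewrite gmul1l. reflexivity.
  - rewrite IH, gmulA. reflexivity.
Qed.

Lemma gprod_rev_inv (l : list G) : gprod (rev (map ginv l)) = ginv (gprod l).
Proof.
  induction l as [|x l IH]; simpl.
  - rewrite ginv_one. reflexivity.
  - rewrite gprod_app, IH. simpl. rewrite gmul1r, ginv_mul. reflexivity.
Qed.

End GroupFacts.

Lemma rev_palindrome_split {A : Type} (w : list A) :
  rev w = w -> exists v, w = v ++ rev v \/ exists c, w = v ++ c :: rev v.
Proof.
  remember (length w) as n eqn:Hn. revert w Hn.
  induction n as [n IH] using (well_founded_induction lt_wf).
  intros w Hn Hw. destruct w as [|a [|a1 w2]].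
  - exists []. left. reflexivity.
  - exists []. right. exists a. reflexivity.
  - destruct (@exists_last _ (a1 :: w2)) as [m [b Em]]; [discriminate|].
    rewrite Em in *. simpl in Hw. rewrite rev_app_distr in Hw. simpl in Hw.
    injection Hw as -> Hm. apply app_inj_tail in Hm as [Hm _].
    simpl in Hn. rewrite length_app in Hn. simpl in Hn.
    destruct (IH (length m) ltac:(lia) m eq_refl Hm) as [v [Ev|[c Ev]]];
      exists (a :: v); [left|right; exists c]; rewrite Ev; simpl;
      rewrite <- !app_assoc; reflexivity.
Qed.

Section Words.
Variable G : Group.
Implicit Types (a b c d : letter G) (v w : list (letter G)).

Definition letter_inv a : letter G := (fst a, negb (snd a)).

Lemma letter_val_inv a : letter_val G (letter_inv a) = ginv (letter_val G a).
Proof.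
  destruct a as [x []]; unfold letter_inv, letter_val; simpl; auto.
  rewrite ginv_involutive. reflexivity.
Qed.

Lemma word_eval_app v w : word_eval (v ++ w) = gmul (word_eval v) (word_eval w).
Proof.
  induction v as [|a v IH]; simpl.
  - rewrite gmul1l. reflexivity.
  - rewrite IH, gmulA. reflexivity.
Qed.

Lemma word_eval_inv w : word_eval (rev (map letter_inv w)) = ginv (word_eval w).
Proof.
  induction w as [|a w IH]; simpl.
  - rewrite ginv_one. reflexivity.
  - rewrite word_eval_app, IH. simpl.
    rewrite gmul1r, letter_val_inv, ginv_mul. reflexivity.
Qed.

Definition cancels a b := fst a = fst b /\ snd a <> snd b.

Lemma cancels_sym a b : cancels a b -> cancels b a.
Proof. intros [E N]. split; auto. Qed.

Lemma letter_val_cancels a b :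
  cancels a b -> gmul (letter_val G a) (letter_val G b) = gone.
Proof.
  destruct a as [x []], b as [y []]; unfold cancels, letter_val; simpl;
    intros [<- N]; try congruence; auto using gmulVl, gmulVr.
Qed.

Lemma reduced_cons_inv a w : reduced (a :: w) -> reduced w.
Proof. destruct w; simpl; tauto. Qed.

Lemma reduced_app_l v w : reduced (v ++ w) -> reduced v.
Proof.
  induction v as [|a [|b v] IH]; simpl; tauto.
Qed.

Lemma reduced_app_mid v c w :
  reduced (v ++ [c]) -> reduced (c :: w) -> reduced (v ++ c :: w).
Proof.
  induction v as [|a [|b v] IH]; simpl; tauto.
Qed.

Lemma reduced_rev w : reduced w -> reduced (rev w).
Proof.
  induction w as [|a [|b w] IH]; simpl; try tauto.
  intros [N R]. rewrite <- app_assoc. apply reduced_app_mid; [exact (IH R)|].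
  split; [|exact I]. intros C. apply N, cancels_sym, C.
Qed.

Variable X : G -> Prop.

Lemma reduce_word w : word_over X w -> exists w',
  word_over X w' /\ reduced w' /\
  word_eval w' = word_eval w /\ word_eval (rev w') = word_eval (rev w).
Proof.
  induction w as [|a w IH]; intros Hw.
  - exists []. simpl. auto.
  - inversion Hw as [|? ? Ha Hw']; subst.
    destruct (IH Hw') as [[|b w'] [Ho [Hr [E1 E2]]]].
    + exists [a]. simpl in *. rewrite <- E1, word_eval_app, <- E2. simpl.
      rewrite gmul1l. repeat split. repeat constructor. exact Ha.
    + destruct (classic (cancels a b)) as [C|C].
      * inversion Ho; subst. exists w'.
        repeat split; eauto using reduced_cons_inv.
        -- simpl. rewrite <- E1. simpl.
           rewrite gmulA, letter_val_cancels, gmul1l; auto.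
        -- simpl. rewrite word_eval_app, <- E2. simpl. rewrite word_eval_app. simpl.
           rewrite !gmul1r, <- gmulA, letter_val_cancels, gmul1r;
             auto using cancels_sym.
      * exists (a :: b :: w'). repeat split; auto.
        -- constructor; assumption.
        -- simpl. rewrite <- E1. reflexivity.
        -- change (rev (a :: b :: w')) with (rev (b :: w') ++ [a]).
           simpl (rev (a :: w)). rewrite !word_eval_app, E2. reflexivity.
Qed.

Lemma palindrome_even v :
  reduced v -> word_over X v -> palindrome X (word_eval (v ++ rev v)).
Proof.
  destruct v as [|d v _] using rev_ind; intros Hr Hv.
  - exists []. simpl. repeat split. constructor.
  - exists ((v ++ [d]) ++ rev (v ++ [d])). repeat split.
    + apply Forall_app. split; auto. apply Forall_rev. exact Hv.
    + pose proof (reduced_rev _ Hr) as Hr'. rewrite rev_app_distr in *.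
      rewrite <- app_assoc. apply reduced_app_mid; auto.
      split; [intros [_ N]; apply N; reflexivity | exact Hr'].
    + rewrite rev_app_distr, rev_involutive. reflexivity.
Qed.

(* Letters cancelling at the centre of an odd palindromic word are dropped
   in pairs until the word is reduced. *)
Lemma palindrome_odd v : reduced v -> word_over X v ->
  forall c, X (fst c) -> palindrome X (word_eval (v ++ c :: rev v)).
Proof.
  induction v as [|d v IH] using rev_ind; intros Hr Hv c Hc.
  - exists [c]. simpl. repeat split. repeat constructor. exact Hc.
  - apply Forall_app in Hv as [Hv Hd]. inversion Hd; subst.
    destruct (classic (cancels d c)) as [C|C].
    + replace (word_eval ((v ++ [d]) ++ c :: rev (v ++ [d])))
        with (word_eval (v ++ d :: rev v)).
      * apply IH; eauto using reduced_app_l.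
      * rewrite rev_app_distr, <- app_assoc. simpl. rewrite !word_eval_app. simpl.
        rewrite (gmulA _ (letter_val G d)), letter_val_cancels, gmul1l; auto.
    + exists ((v ++ [d]) ++ c :: rev (v ++ [d])). repeat split.
      * apply Forall_app. split; [apply Forall_app; auto|].
        constructor; [exact Hc|]. apply Forall_rev, Forall_app. auto.
      * pose proof (reduced_rev _ Hr) as Hr'. rewrite rev_app_distr in *.
        rewrite <- app_assoc. apply reduced_app_mid; auto.
        split; [exact C|]. split; [|exact Hr'].
        intros C'. apply C, cancels_sym, C'.
      * rewrite rev_app_distr. simpl. rewrite rev_involutive, <- app_assoc.
        reflexivity.
Qed.

Definition palindromic (g : G) :=
  exists w, word_over X w /\ rev w = w /\ word_eval w = g.

Lemma palindrome_palindromic g : palindrome X g -> palindromic g.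
Proof. intros [w [Ho [_ [Hr E]]]]. exists w. auto. Qed.

Lemma palindromic_palindrome g : palindromic g -> palindrome X g.
Proof.
  intros [w [Ho [Hrev <-]]].
  destruct (rev_palindrome_split w Hrev) as [v [->|[c ->]]];
    apply Forall_app in Ho as [Ho Hc];
    destruct (reduce_word v Ho) as [v' [Ho' [Hr' [E1 E2]]]].
  - rewrite word_eval_app, <- E1, <- E2, <- word_eval_app.
    apply palindrome_even; auto.
  - inversion Hc; subst.
    rewrite word_eval_app. simpl. rewrite <- E1, <- E2.
    change (gmul (letter_val G c) (word_eval (rev v'))) with (word_eval (c :: rev v')).
    rewrite <- word_eval_app. apply palindrome_odd; auto.
Qed.

Lemma palindromic_one : palindromic gone.
Proof. exists []. repeat split. constructor. Qed.

Lemma palindromic_inv p : palindromic p -> palindromic (ginv p).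
Proof.
  intros [w [Ho [Hr <-]]]. exists (rev (map letter_inv w)). repeat split.
  - apply Forall_rev, Forall_map. eapply Forall_impl; [|exact Ho]. auto.
  - rewrite rev_involutive, <- map_rev, Hr. reflexivity.
  - apply word_eval_inv.
Qed.

Lemma palindromic_conj w p : word_over X w -> palindromic p ->
  palindromic (gmul (word_eval (rev w)) (gmul p (word_eval w))).
Proof.
  intros Hw [wp [Ho [Hr <-]]]. exists (rev w ++ wp ++ w). repeat split.
  - apply Forall_app. split; [apply Forall_rev; exact Hw|].
    apply Forall_app. auto.
  - rewrite !rev_app_distr, rev_involutive, Hr, app_assoc. reflexivity.
  - rewrite !word_eval_app. reflexivity.
Qed.

Lemma palindromic_sandwich (a b : G) :
  palindromic a -> palindromic b -> palindromic (gmul a (gmul b a)).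
Proof.
  intros [wa [Ho [Hr <-]]] Hb.
  pose proof (palindromic_conj wa _ Ho Hb) as H. rewrite Hr in H. exact H.
Qed.

Lemma palindromic_pow_mul k (a b : G) : palindromic a -> palindromic b ->
  palindromic (gmul (gpow_nat (gmul a b) k) a).
Proof.
  revert a b. induction k as [|k IH]; intros a b Ha Hb.
  - simpl. rewrite gmul1l. exact Ha.
  - rewrite gpow_nat_mul_shift, gpow_nat_succ_r, (gmulA _ (gpow_nat _ k)).
    apply palindromic_sandwich; auto.
Qed.

Lemma palindrome_pow_two_factors p1 p2 :
  palindrome X p1 -> palindrome X p2 -> forall m : Z, exists a b : G,
    palindrome X a /\ palindrome X b /\ gpowZ (gmul p1 p2) m = gmul a b.
Proof.
  intros H1%palindrome_palindromic H2%palindrome_palindromic [|n|n]; simpl.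
  - exists gone, gone. rewrite gmul1l.
    repeat split; apply palindromic_palindrome, palindromic_one.
  - destruct (Pos2Nat.is_succ n) as [k ->].
    exists (gmul (gpow_nat (gmul p1 p2) k) p1), p2.
    rewrite gpow_nat_succ_r, gmulA.
    split; [|split; [|reflexivity]]; apply palindromic_palindrome;
      auto using palindromic_pow_mul.
  - destruct (Pos2Nat.is_succ n) as [k ->].
    exists (ginv p2), (ginv (gmul (gpow_nat (gmul p1 p2) k) p1)).
    rewrite gpow_nat_succ_r, gmulA, (ginv_mul _ (gmul _ p1) p2).
    split; [|split; [|reflexivity]]; apply palindromic_palindrome;
      auto using palindromic_inv, palindromic_pow_mul.
Qed.

(* The pair (s, t) is replaced by (t^-1, s^-1) at every step; the hypothesis
   transfers because t^-1 p s^-1 = (s p^-1 t)^-1. *)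
Lemma palindromic_alternating_product s t :
  (forall p, palindromic p -> palindromic (gmul s (gmul p t))) ->
  forall ps, Forall palindromic ps -> exists qs,
    Forall palindromic qs /\ length qs = length ps /\
    gprod qs = gmul s (gmul (gprod ps) (if Nat.odd (length ps) then t else ginv s)).
Proof.
  intros Hst ps Hps. revert s t Hst.
  induction Hps as [|p ps Hp Hps IH]; intros s t Hst.
  - exists []. split; [constructor | split; [reflexivity|]].
    simpl. rewrite gmul1l, gmulVr. reflexivity.
  - assert (Hts : forall q, palindromic q ->
              palindromic (gmul (ginv t) (gmul q (ginv s)))).
    { intros q Hq. replace (gmul (ginv t) (gmul q (ginv s)))
        with (ginv (gmul s (gmul (ginv q) t))).
      - apply palindromic_inv, Hst, palindromic_inv, Hq.
      - rewrite !ginv_mul, ginv_involutive, gmulA. reflexivity. }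
    destruct (IH _ _ Hts) as [qs [Hq [Hl Eq]]].
    exists (gmul s (gmul p t) :: qs). repeat split.
    + constructor; auto.
    + simpl. rewrite Hl. reflexivity.
    + simpl. rewrite Eq, Nat.odd_succ, <- Nat.negb_odd.
      destruct (Nat.odd (length ps)); simpl; rewrite ?ginv_involutive;
        rewrite <- !gmulA, gmulKV; reflexivity.
Qed.

Lemma lP_le_palindromic qs g n : Forall palindromic qs ->
  length qs <= n -> gprod qs = g -> lP_le X g n.
Proof.
  intros Hq Hl E. exists qs. repeat split; auto.
  eapply Forall_impl; [exact palindromic_palindrome | exact Hq].
Qed.

Lemma lP_le_commutator_gprod (HX : generates X) ps u :
  Forall (palindrome X) ps ->
  lP_le X (commutator u (gprod ps))
    (2 * length ps + (if Nat.odd (length ps) then 1 else 0)).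
Proof.
  intros Hps. apply (Forall_impl _ palindrome_palindromic) in Hps.
  destruct (HX u) as [w [Hw <-]].
  set (t := word_eval (map letter_inv w)).
  assert (Hconj : forall p, palindromic p ->
            palindromic (gmul (ginv (word_eval w)) (gmul p t))).
  { intros p Hp. rewrite <- word_eval_inv. apply palindromic_conj; auto.
    apply Forall_map. eapply Forall_impl; [|exact Hw]. auto. }
  assert (Hinv : Forall palindromic (rev (map ginv ps))).
  { apply Forall_rev, Forall_map.
    eapply Forall_impl; [exact palindromic_inv | exact Hps]. }
  destruct (palindromic_alternating_product _ _ Hconj _ Hinv) as [qs [Hq [Hl Eq]]].
  rewrite length_rev, length_map, gprod_rev_inv, ginv_involutive in *.
  unfold commutator. destruct (Nat.odd (length ps)).
  - apply (lP_le_palindromic (qs ++ gmul (ginv t) (word_eval w) :: ps)).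
    + apply Forall_app. split; [exact Hq|]. constructor; [|exact Hps].
      pose proof (palindromic_inv _ (Hconj _ palindromic_one)) as H.
      rewrite gmul1l, ginv_mul, ginv_involutive in H. exact H.
    + rewrite length_app. simpl. lia.
    + rewrite gprod_app, Eq. simpl. rewrite <- !gmulA, gmulKV. reflexivity.
  - apply (lP_le_palindromic (qs ++ ps)).
    + apply Forall_app. auto.
    + rewrite length_app. lia.
    + rewrite gprod_app, Eq, <- !gmulA. reflexivity.
Qed.

End Words.

Theorem lemma2p5 (G : Group) (X : G -> Prop) (HX : generates X) :
  (forall (p1 p2 : G), palindrome X p1 -> palindrome X p2 ->
     forall m : Z, exists a b : G,
       palindrome X a /\ palindrome X b /\ gpowZ (gmul p1 p2) m = gmul a b)
  /\
  (forall (ps : list G) (u : G), Forall (palindrome X) ps ->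
     lP_le X (commutator u (gprod ps))
       (2 * length ps + (if Nat.odd (length ps) then 1 else 0))).
Proof.
  split.
  - exact (palindrome_pow_two_factors G X).
  - exact (lP_le_commutator_gprod G X HX).
Qed.
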